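(* Fix a countable base $\mathcal{B}$ for the topology of $\mathbb{R}$. Let $\sigma$ be a strategy for \textsc{Bob} in $\mathsf{BM}_\mathrm{fin}(\mathbb{R})$, let $X\subseteq\mathbb{R}$ be a countable set and let $\mathcal{Y}$ be a countable family of nowhere dense subsets of $\mathbb{R}$. Then there exists a sequence $s=\langle\mathcal{A}_n:n\in\omega\rangle$ of finite collections of members of $\mathcal{B}$ (moves of \textsc{Alice}, compatible with $\sigma$) such that $\sigma*s$ is a closed nowhere dense subset of $\mathbb{R}$ disjoint from $X\cup\bigcup\mathcal{Y}$.
   Context: The game $\mathsf{BM}_\mathrm{fin}(\mathbb{R})$: \textsc{Alice} plays a non-empty open set $A_0$ (write $\mathcal{A}_0=\{A_0\}$); \textsc{Bob} plays a finite collection $\mathcal{B}_0$ of non-empty open subsets of $A_0$; in inning $n+1$, for each $B \in \mathcal{B}_n$ \textsc{Alice} plays a non-empty open set $A_B \subseteq B$, letting $\mathcal{A}_{n+1}=\{A_B : B\in\mathcal{B}_n\}$, and \textsc{Bob} plays a finite collection $\mathcal{B}_{n+1}$ of non-empty open subsets of $\bigcup\mathcal{A}_{n+1}$; \textsc{Bob} wins if $\bigcap_{n}\bigcup\mathcal{B}_n\neq\emptyset$. A strategy $\sigma$ for \textsc{Bob} assigns to each finite sequence $\langle\mathcal{A}_0,\dots,\mathcal{A}_n\rangle$ of \textsc{Alice}'s moves his answer $\sigma(\langle\mathcal{A}_0,\dots,\mathcal{A}_n\rangle)$. For such $\sigma$ and a sequence $s=\langle\mathcal{A}_n:n\in\omega\rangle$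 of \textsc{Alice}'s moves compatible with $\sigma$ (i.e. forming a legal play against $\sigma$), $\sigma*s=\bigcap_{n\in\omega}\bigcup\sigma(\langle\mathcal{A}_0,\dots,\mathcal{A}_n\rangle)$. *)

From mathcomp Require Import all_boot all_order all_algebra.
From mathcomp Require Import all_classical all_reals topology normedtype.
Set Implicit Arguments. Unset Strict Implicit. Unset Printing Implicit Defensive.
Import Order.TTheory GRing.Theory Num.Theory.
Import numFieldTopology.Exports numFieldNormedType.Exports.
Local Open Scope classical_set_scope.
Local Open Scope ring_scope.

Section BMfin.
Variable R : realType.

Definition coll := seq (set R).

Definition Ucoll (l : coll) : set R :=
  [set x | exists i, (i < size l)%N /\ nth set0 l i x].

Definition all_coll (P : set R -> Prop) (l : coll) : Prop :=
  forall i, (i < size l)%N -> P (nth set0 l i).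

Definition nonempty_open (U : set R) : Prop := open U /\ U !=set0.

(* A strategy for Bob: from the finite sequence of Alice's moves
   <A_0, ..., A_n> to Bob's answer B_n. *)
Definition strategy := seq coll -> coll.

(* h = <A_0,...,A_n> is a legal finite sequence of Alice's moves against sigma:
   A_0 = {a} with a non-empty open; and A_{k+1} = {A_B : B in B_k} where
   B_k = sigma <A_0..A_k>, with A_B a non-empty open subset of B
   (A_{k+1} is listed aligned with the list B_k). *)
Definition legal_hist (sigma : strategy) (h : seq coll) : Prop :=
  (0 < size h)%N /\
  (exists a, nth [::] h 0 = [:: a] /\ nonempty_open a) /\
  (forall k, (k.+1 < size h)%N ->
     let Bk := sigma (take k.+1 h) in
     let Ak1 := nth [::] h k.+1 in
     size Ak1 = size Bk /\
     forall i, (i < size Bk)%N ->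
       nonempty_open (nth set0 Ak1 i) /\ nth set0 Ak1 i `<=` nth set0 Bk i).

Definition bob_strategy (sigma : strategy) : Prop :=
  forall h, legal_hist sigma h ->
    all_coll (fun B => nonempty_open B /\ B `<=` Ucoll (last [::] h)) (sigma h).

Definition prefix (s : nat -> coll) (n : nat) : seq coll := mkseq s n.+1.

Definition compatible (sigma : strategy) (s : nat -> coll) : Prop :=
  forall n, legal_hist sigma (prefix s n).

Definition outcome (sigma : strategy) (s : nat -> coll) : set R :=
  \bigcap_n Ucoll (sigma (prefix s n)).

Definition nowhere_dense (A : set R) : Prop := interior (closure A) = set0.

Definition is_base (Bs : set (set R)) : Prop :=
  (forall b, Bs b -> open b) /\
  (forall U : set R, open U -> forall x, U x -> exists b, Bs b /\ b x /\ b `<=` U).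

End BMfin.

(* Enumerate the nowhere dense sets to be avoided -- the points of X, the
   rationals and the members of Ys -- as Z_0, Z_1, ....  In inning k+1 Alice
   answers each open set B offered by Bob with a basic set whose closure lies
   in B and misses Z_k; this is possible since B minus the closure of Z_k is
   open and non-empty.  The outcome is then the intersection of the finite
   unions of the closures of Alice's moves, hence closed; it misses every Z_k,
   and a closed set without rational points has empty interior. *)

From Pilot Require Import Defs.
From mathcomp Require Import all_boot all_order all_algebra.
From mathcomp Require Import all_classical all_reals topology normedtype.
Import Order.TTheory GRing.Theory Num.Theory.
Import numFieldTopology.Exports numFieldNormedType.Exports.

Set Implicit Arguments.
Unset Strict Implicit.
Unset Printing Implicit Defensive.

Local Open Scope classical_set_scope.

Lemma take_mkseq T (f : nat -> T) m n : (m <= n)%N -> take m (mkseq f n) = mkseq f m.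
Proof. by move=> mn; rewrite /mkseq -map_take take_iota (minn_idPl mn). Qed.

Lemma countableU T (A B : set T) : countable A -> countable B -> countable (A `|` B).
Proof.
move=> cA cB; rewrite -bigcup2inE; apply: bigcup_countable.
  exact/finite_set_countable/finite_II.
by move=> [|[|i]] //= _; exact: countable0.
Qed.

Lemma countable_image T U (f : T -> U) (A : set T) : countable A -> countable (f @` A).
Proof. exact: sub_countable (card_image_le f A). Qed.

Section NowhereDense.
Variable R : realType.
Implicit Types (A B U Z : set R) (F : set (set R)).

Lemma nowhere_denseS A B : A `<=` B -> nowhere_dense B -> nowhere_dense A.
Proof.
by move=> AB ndB; rewrite /nowhere_dense -subset0 -ndB; exact/interiorS/closureS.
Qed.

Lemma nowhere_dense_set1 (x : R) : nowhere_dense [set x].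
Proof.
have cx : closed [set x].
  exact: (@accessible_closed_set1 _ (hausdorff_accessible (@Rhausdorff R)) x).
by rewrite /nowhere_dense -(closure_id _).1 // interior_set1.
Qed.

Lemma open_setD_closure U Z : open U -> open (U `\` closure Z).
Proof. by move=> oU; apply: openI => //; exact/closed_openC/closed_closure. Qed.

Lemma setD_closure_neq0 U Z : open U -> U !=set0 -> nowhere_dense Z ->
  U `\` closure Z !=set0.
Proof.
move=> oU [x Ux] ndZ; apply: contrapT => UZ0.
have : U `<=` closure Z by move=> y Uy; apply: contrapT => nZy; apply: UZ0; exists y.
by rewrite open_subsetE // ndZ => /(_ x Ux).
Qed.

Lemma closed_ratr_free_nowhere_dense (K : set R) :
  closed K -> (forall q : rat, ~ K (ratr q)) -> nowhere_dense K.
Proof.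
move=> cK Kq; rewrite /nowhere_dense -(closure_id _).1 // -subset0 => x Kx.
have [y [/interior_subset Ky [q _ qy]]] := dense_rat (ex_intro _ x Kx) (@open_interior _ K).
by apply: (Kq q); rewrite qy.
Qed.

Lemma countable_nowhere_dense_cover F :
  countable F -> (forall Y, F Y -> nowhere_dense Y) ->
  exists Z : nat -> set R,
    (forall k, nowhere_dense (Z k)) /\ (forall Y, F Y -> exists k, Y `<=` Z k).
Proof.
move=> /countable_injP [f finj] ndF.
exists (fun k => \bigcup_(Y in [set Y | F Y /\ f Y = k]) Y); split; last first.
  by move=> Y FY; exists (f Y) => x Yx; exists Y.
move=> k; have [[Y0 [FY0 fY0]]|noY] := pselect (exists Y, F Y /\ f Y = k).
  apply: nowhere_denseS (ndF _ FY0) => x [Y [FY fY] Yx].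
  by rewrite -(finj Y Y0) ?inE // fY fY0.
apply: nowhere_denseS (nowhere_dense_set1 0) => x [Y FYk _].
by case: noY; exists Y.
Qed.

Lemma Ucoll_nth (f : set R -> set R) (l : coll R) x :
  Ucoll (map f l) x <-> exists2 i, (i < size l)%N & f (nth set0 l i) x.
Proof.
rewrite /Ucoll /= size_map; split => -[i].
  by move=> [il]; rewrite (nth_map set0) //; exists i.
by move=> il fx; exists i; rewrite (nth_map set0).
Qed.

Lemma closed_Ucoll_closure (l : coll R) : closed (Ucoll (map closure l)).
Proof.
rewrite (_ : Ucoll _ = \bigcup_(i in `I_(size l)) closure (nth set0 l i)).
  by apply: closed_bigcup => [|i _]; [exact: finite_II | exact: closed_closure].
apply/seteqP; split => x; first by move=> /Ucoll_nth [i il lx]; exists i.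
by move=> [i il lx]; apply/Ucoll_nth; exists i.
Qed.

Section Base.
Variable Bs : set (set R).
Hypothesis hB : is_base Bs.

Lemma base_closure_refinement U : open U -> U !=set0 ->
  exists2 b, Bs b & b !=set0 /\ closure b `<=` U.
Proof.
move=> oU [x Ux]; have [_ baseBs] := hB.
have /nbhs_ballP [e /= e0 eU] : nbhs x U by exact: open_nbhs_nbhs.
have e20 : (0 < e / 2)%R by rewrite divr_gt0.
have e2e : (e / 2 < e)%R by rewrite ltr_pdivrMr // ltr_pMr // ltr1n.
have [b [Bb [bx bsub]]] := baseBs _ (ball_open x (e / 2)) x (ballxx _ e20).
exists b => //; split; first by exists x.
by move=> z /(closureS bsub) /(closed_ball_subset e20 e2e); exact: eU.
Qed.

Lemma base_refinement_avoiding U Z : open U -> U !=set0 -> nowhere_dense Z ->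
  exists2 b, Bs b & b !=set0 /\ closure b `<=` U `\` Z.
Proof.
move=> oU U0 ndZ.
have [b Bb [b0 bUZ]] : exists2 b, Bs b & b !=set0 /\ closure b `<=` U `\` closure Z.
  by apply: base_closure_refinement; [exact: open_setD_closure | exact: setD_closure_neq0].
by exists b => //; split => // x /bUZ [Ux nZx]; split => // /subset_closure.
Qed.

End Base.
End NowhereDense.

Section AvoidingPlay.
Variables (R : realType) (Bs : set (set R)) (sigma : strategy R) (Z : nat -> set R).
Hypotheses (hB : is_base Bs) (hsig : bob_strategy sigma).
Hypothesis ndZ : forall k, nowhere_dense (Z k).

Definition good_reply k (B : set R) : set (set R) :=
  [set b | [/\ Bs b, b !=set0 & closure b `<=` B `\` Z k]].

Definition reply k B := xget set0 (good_reply k B).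

Lemma replyP k B : open B -> B !=set0 -> good_reply k B (reply k B).
Proof.
move=> oB B0; apply: xgetPex.
by have [b Bb [b0 bB]] := base_refinement_avoiding hB oB B0 (ndZ k); exists b.
Qed.

Lemma reply_first : Bs (reply 0 setT) /\ reply 0 setT !=set0.
Proof. by have [] := replyP 0 openT (ex_intro _ 0%R I). Qed.

Fixpoint play n : seq (coll R) :=
  if n is k.+1 then rcons (play k) (map (reply k) (sigma (play k)))
  else [:: [:: reply 0 setT]].

Definition moves n : coll R := last [::] (play n).

Lemma prefix_moves n : Defs.prefix moves n = play n.
Proof.
elim: n => // n IHn.
by rewrite /Defs.prefix mkseqS -/(Defs.prefix moves n) IHn /moves /= last_rcons.
Qed.

Local Notation bob n := (sigma (Defs.prefix moves n)).

Lemma moves_succ n : moves n.+1 = map (reply n) (bob n).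
Proof. by rewrite prefix_moves /moves /= last_rcons. Qed.

Lemma size_moves_succ n : size (moves n.+1) = size (bob n).
Proof. by rewrite moves_succ size_map. Qed.

Lemma moves_legal n : legal_hist sigma (Defs.prefix moves n).
Proof.
elim/ltn_ind: n => n IHn; split; first by rewrite size_mkseq.
split.
  exists (reply 0 setT); rewrite nth_mkseq //; split => //.
  by have [Br r0] := reply_first; split => //; exact: hB.1.
move=> k; rewrite size_mkseq ltnS => kn.
rewrite take_mkseq 1?ltnW // nth_mkseq // -/(Defs.prefix moves k); cbv zeta.
rewrite size_moves_succ; split => // i ib.
have [[oB B0] _] := hsig (IHn k kn) ib.
have [Br r0 rB] := replyP k oB B0.
rewrite moves_succ (nth_map set0) //; split; first by split => //; exact: hB.1.
by move=> x /subset_closure /rB [].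
Qed.

Lemma reply_bob k i : (i < size (bob k))%N ->
  good_reply k (nth set0 (bob k) i) (nth set0 (moves k.+1) i).
Proof.
move=> ib; rewrite moves_succ (nth_map set0) //.
by have [[oB B0] _] := hsig (moves_legal k) ib; exact: replyP.
Qed.

Lemma moves_basic n : all_coll Bs (moves n).
Proof.
case: n => [|k] i; first by case: i => // _; have [] := reply_first.
by rewrite size_moves_succ => /reply_bob [].
Qed.

Lemma outcome_sub_closure k : outcome sigma moves `<=` Ucoll (map closure (moves k.+1)).
Proof.
move=> x /(_ k.+1 I) [i [ib Bx]].
have [_ /(_ x Bx)] := hsig (moves_legal k.+1) ib.
rewrite /Defs.prefix mkseqS last_rcons => -[j [jm mx]].
by apply/Ucoll_nth; exists j => //; exact: subset_closure.
Qed.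

Lemma closure_moves_sub k : Ucoll (map closure (moves k.+1)) `<=` Ucoll (bob k) `\` Z k.
Proof.
move=> x /Ucoll_nth [i]; rewrite size_moves_succ => ib.
by have [_ _ rB] := reply_bob ib => /rB [Bx nZx]; split => //; exists i.
Qed.

Lemma outcome_movesE : outcome sigma moves = \bigcap_k Ucoll (map closure (moves k.+1)).
Proof.
apply/seteqP; split => x Kx k _; first exact: outcome_sub_closure.
exact: (closure_moves_sub (Kx k I)).1.
Qed.

Lemma closed_outcome_moves : closed (outcome sigma moves).
Proof. by rewrite outcome_movesE; apply: closed_bigI => k _; exact: closed_Ucoll_closure. Qed.

Lemma outcome_moves_avoid k x : outcome sigma moves x -> ~ Z k x.
Proof. by move=> /(outcome_sub_closure k) /closure_moves_sub []. Qed.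

End AvoidingPlay.

Theorem lemma4p8 (R : realType) (Bs : set (set R)) (sigma : strategy R)
  (X : set R) (Ys : set (set R)) :
  countable Bs -> is_base Bs ->
  bob_strategy sigma ->
  countable X ->
  countable Ys -> (forall Y, Ys Y -> nowhere_dense Y) ->
  exists s : nat -> coll R,
    (forall n, all_coll Bs (s n)) /\
    compatible sigma s /\
    closed (outcome sigma s) /\
    nowhere_dense (outcome sigma s) /\
    (forall x, outcome sigma s x -> ~ X x /\ (forall Y, Ys Y -> ~ Y x)).
Proof.
move=> _ hB hsig cX cYs ndYs.
pose F := Ys `|` [set [set x] | x in X `|` range ratr].
have cF : countable F.
  apply: countableU cYs (countable_image _ (countableU cX _)).
  exact/countable_image/countableP.
have ndF Y : F Y -> nowhere_dense Y.
  by move=> [/ndYs // | [x _ <-]]; exact: nowhere_dense_set1.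
have [Z [ndZ FZ]] := countable_nowhere_dense_cover cF ndF.
pose s := moves Bs sigma Z.
have avoidF x Y : outcome sigma s x -> F Y -> ~ Y x.
  by move=> Kx /FZ [k YZ] /YZ; exact: outcome_moves_avoid Kx.
exists s; split; first exact: moves_basic.
split; first exact: moves_legal.
split; first exact: closed_outcome_moves.
split.
  apply: closed_ratr_free_nowhere_dense => [|q Kq]; first exact: closed_outcome_moves.
  apply: (avoidF _ [set ratr q] Kq) => //.
  by right; exists (ratr q) => //; right; exists q.
move=> x Kx; split => [Xx | Y YsY]; last exact: avoidF Kx (or_introl YsY).
by apply: (avoidF _ [set x] Kx) => //; right; exists x => //; left.
Qed.
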